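(* Fix $\alpha\in[0,1)$. Let $M=(r,q,u)$ be a floor-randomized, left-continuous mechanism satisfying DD. If $M$ is dominated, then there exists a floor-randomized, left-continuous mechanism $M'=(r',q',u')$ satisfying DD that dominates $M$ and satisfies $q'(\theta)r'(\theta)\le q(\theta)r(\theta)$ for all $\theta\in\Theta$.
   Context: Setting. Let $\Theta=[\underline\theta,\overline\theta]$ with $0<\underline\theta<\overline\theta$. Let $c>0$ and let $P:\mathbb R_+\to\mathbb R_+$ be continuous and strictly decreasing with $P(\overline q)=0$ for some $\overline q>0$. Put $V(q)=\int_0^q P(z)\,dz$ and $\mathrm{TS}(\theta,q)=V(q)-c-\theta q$ for $q>0$, $\mathrm{TS}(\theta,0)=0$. Assume (A2): $\mathrm{TS}(\overline\theta,P^{-1}(\overline\theta))>0$. A mechanism is a triple $M=(r,q,u)$ of functions $r:\Theta\to[0,1]$, $q:\Theta\to[0,\overline q]$, $u:\Theta\to\mathbb R$ with $q(\theta)=0$ if and only if $r(\theta)=0$. It is IC if $u(\theta)\ge u(\theta')+(\theta'-\theta)q(\theta')r(\theta')$ for all $\theta,\theta'\in\Theta$, and IR if $u(\theta)\ge 0$ for all $\theta$. (Known fact: $M$ is IC iff $\theta\mapsto q(\theta)r(\theta)$ is nonincreasing and $u(\theta)=u(\overline\theta)+\int_\theta^{\overline\theta}q(z)r(z)\,dz$ for all $\theta$; an IC mechanism is IR iff $u(\overline\theta)\ge0$.) Fix $\alpha\in[0,1)$. The regulator's surplus at $\theta$ is $\mathrm{RS}_\alpha(\theta,M)=r(\theta)\,\mathrm{TS}(\theta,q(\theta))-(1-\alpha)u(\theta)$.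 An IC and IR mechanism $\tilde M$ dominates an IC and IR mechanism $M$ if $\mathrm{RS}_\alpha(\theta,\tilde M)\ge \mathrm{RS}_\alpha(\theta,M)$ for all $\theta\in\Theta$ with strict inequality for some $\theta$; $M$ is undominated if it is IC, IR and not dominated by any IC and IR mechanism. The quantity floor $\hat q$ is the unique $q>0$ with $V(q)-qP(q)=c$. A mechanism $(r,q,u)$ is floor-randomized if it is IC, IR, $u(\overline\theta)=0$, and $\Theta$ can be partitioned into three pairwise disjoint (possibly empty) intervals $\Theta_1,\Theta_{01},\Theta_0$, with every element of $\Theta_0$ larger than every element of $\Theta_{01}$ and every element of $\Theta_{01}$ larger than every element of $\Theta_1$, such that: $q(\theta)\ge\hat q$ and $r(\theta)=1$ for $\theta\in\Theta_1$; $q(\theta)=\hat q$ and $r(\theta)\in(0,1)$ for $\theta\in\Theta_{01}$; $q(\theta)=r(\theta)=0$ for $\theta\in\Theta_0$. The efficient quantity is $q_e(\theta)=P^{-1}(\theta)$. A mechanism satisfies downward distortion (DD) if $q(\theta)\le q_e(\theta)$ for all $\theta$, with equality at $\theta=\underline\theta$. A mechanism is left continuous if $\theta\mapsto q(\theta)r(\theta)$ is left continuous at every $\theta\in(\underline\theta,\overline\theta]$. *)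

From Stdlib Require Import Reals Lra ClassicalEpsilon.
From Coquelicot Require Import Coquelicot.
Open Scope R_scope.

(* Parameters: P (inverse demand), qbar, c, tl = underline theta, th = overline theta. *)

Definition inTheta (tl th x : R) : Prop := tl <= x <= th.

Definition demand_ok (P : R -> R) (qbar : R) : Prop :=
  0 < qbar /\ P qbar = 0 /\
  (forall x, 0 <= x <= qbar ->
     filterlim P (within (fun y => 0 <= y <= qbar) (locally x)) (locally (P x))) /\
  (forall x y, 0 <= x -> x < y -> y <= qbar -> P y < P x).

Definition V (P : R -> R) (q : R) : R := RInt P 0 q.

Definition TS (P : R -> R) (c theta q : R) : R :=
  if Req_EM_T q 0 then 0 else V P q - c - theta * q.

(* P^{-1}(theta): the point of [0,qbar] where P equals theta
   (unique by strict monotonicity whenever it exists). *)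
Definition Pinv (P : R -> R) (qbar theta : R) : R :=
  epsilon (inhabits 0) (fun x => 0 <= x <= qbar /\ P x = theta).

Definition q_e (P : R -> R) (qbar theta : R) : R := Pinv P qbar theta.

Definition qhat (P : R -> R) (qbar c : R) : R :=
  epsilon (inhabits 0) (fun q => 0 < q <= qbar /\ V P q - q * P q = c).

Definition A2 (P : R -> R) (qbar c th : R) : Prop :=
  TS P c th (Pinv P qbar th) > 0.

Definition is_mech (qbar tl th : R) (r q u : R -> R) : Prop :=
  forall t, inTheta tl th t ->
    0 <= r t <= 1 /\ 0 <= q t <= qbar /\ (q t = 0 <-> r t = 0).

Definition IC (tl th : R) (r q u : R -> R) : Prop :=
  forall t t', inTheta tl th t -> inTheta tl th t' ->
    u t >= u t' + (t' - t) * q t' * r t'.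

Definition IR (tl th : R) (u : R -> R) : Prop :=
  forall t, inTheta tl th t -> u t >= 0.

Definition IC_IR (qbar tl th : R) (r q u : R -> R) : Prop :=
  is_mech qbar tl th r q u /\ IC tl th r q u /\ IR tl th u.

Definition RS (P : R -> R) (c alpha t : R) (r q u : R -> R) : R :=
  r t * TS P c t (q t) - (1 - alpha) * u t.

Definition dominates (P : R -> R) (qbar c tl th alpha : R)
    (r' q' u' r q u : R -> R) : Prop :=
  IC_IR qbar tl th r' q' u' /\ IC_IR qbar tl th r q u /\
  (forall t, inTheta tl th t -> RS P c alpha t r' q' u' >= RS P c alpha t r q u) /\
  (exists t, inTheta tl th t /\ RS P c alpha t r' q' u' > RS P c alpha t r q u).

Definition dominated (P : R -> R) (qbar c tl th alpha : R) (r q u : R -> R) : Prop :=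
  exists r' q' u', dominates P qbar c tl th alpha r' q' u' r q u.

Definition is_interval (S : R -> Prop) : Prop :=
  forall x y z, S x -> S z -> x <= y <= z -> S y.

Definition floor_randomized (P : R -> R) (qbar c tl th : R) (r q u : R -> R) : Prop :=
  IC_IR qbar tl th r q u /\ u th = 0 /\
  exists T1 T01 T0 : R -> Prop,
    is_interval T1 /\ is_interval T01 /\ is_interval T0 /\
    (forall t, inTheta tl th t <-> (T1 t \/ T01 t \/ T0 t)) /\
    (forall t, ~ (T1 t /\ T01 t)) /\ (forall t, ~ (T1 t /\ T0 t)) /\
    (forall t, ~ (T01 t /\ T0 t)) /\
    (forall x y, T01 x -> T0 y -> x < y) /\
    (forall x y, T1 x -> T01 y -> x < y) /\
    (forall t, T1 t -> q t >= qhat P qbar c /\ r t = 1) /\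
    (forall t, T01 t -> q t = qhat P qbar c /\ 0 < r t < 1) /\
    (forall t, T0 t -> q t = 0 /\ r t = 0).

Definition DD (P : R -> R) (qbar tl th : R) (q : R -> R) : Prop :=
  (forall t, inTheta tl th t -> q t <= q_e P qbar t) /\ q tl = q_e P qbar tl.

Definition left_continuous (tl th : R) (r q : R -> R) : Prop :=
  forall t, tl < t <= th ->
    filterlim (fun s => q s * r s) (at_left t) (locally (q t * r t)).

(* Let x = q r and let x~ be the allocation of a mechanism M~ dominating M. The
   improved mechanism M' has as allocation the left-continuous lower envelope x' of
   x and x~ (the infimum of min x x~ strictly to the left), implemented by the
   floor mechanism (the quantity x' above the floor, the floor with probability
   x' / qhat below it) and charged the least IC rent, the integral of x' from t to
   the top type. By DD the floor surplus is nondecreasing below x, so at each type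
   M' does at least as well as M where x' = x (it charges less rent) and as M~
   where x~ <= x' < x. M' is strictly better than M at the bottom type unless M,
   M~ and M' all charge the same rents; then IC with a common utility and the
   left continuity of x give x~ <= x, so M~ cannot be strictly better than M. *)

From Stdlib Require Import Reals Lra Classical ClassicalEpsilon.
From Coquelicot Require Import Coquelicot.
Open Scope R_scope.

Lemma continuity_pt_lipschitz (f : R -> R) (K x : R) :
  0 <= K -> (forall y, Rabs (f y - f x) <= K * Rabs (y - x)) -> continuity_pt f x.
Proof.
  intros HK Hf. apply continuity_pt_filterlim, filterlim_locally. intros eps.
  assert (Hd : 0 < eps / (K + 1)) by (apply Rdiv_lt_0_compat; [apply cond_pos | lra]).
  exists (mkposreal _ Hd). intros y Hy. change (Rabs (f y - f x) < eps).
  change (Rabs (y - x) < eps / (K + 1)) in Hy.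
  assert (Hyx : (K + 1) * Rabs (y - x) < eps).
  { apply Rmult_lt_reg_l with (/ (K + 1)); [apply Rinv_0_lt_compat; lra|].
    rewrite <- Rmult_assoc, Rinv_l, Rmult_1_l by lra. rewrite Rmult_comm. exact Hy. }
  specialize (Hf y). assert (0 <= Rabs (y - x)) by apply Rabs_pos. nra.
Qed.

Section Demand.

Variables (P : R -> R) (qbar : R).
Hypothesis hP : demand_ok P qbar.

Let qbar_pos : 0 < qbar.
Proof. apply hP. Qed.

(* Clamping to [0, qbar] extends continuity on [0, qbar] to all of R, which is
   the form required by Stdlib's IVT and Coquelicot's integrability criterion. *)
Definition clamp (y : R) : R := Rmax 0 (Rmin y qbar).

Lemma clamp_in y : 0 <= clamp y <= qbar.
Proof. unfold clamp, Rmax, Rmin; repeat destruct Rle_dec; lra. Qed.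

Lemma clamp_id y : 0 <= y <= qbar -> clamp y = y.
Proof. intros; unfold clamp, Rmax, Rmin; repeat destruct Rle_dec; lra. Qed.

Lemma clamp_lipschitz y z : Rabs (clamp y - clamp z) <= Rabs (y - z).
Proof.
  unfold clamp, Rmax, Rmin; repeat destruct Rle_dec; unfold Rabs; repeat destruct Rcase_abs; lra.
Qed.

Lemma continuity_pt_demand_clamp a : continuity_pt (fun y => P (clamp y)) a.
Proof.
  destruct hP as [_ [_ [hcont _]]].
  apply continuity_pt_filterlim.
  apply (filterlim_comp _ _ _ clamp P _
           (within (fun y => 0 <= y <= qbar) (locally (clamp a)))); [|apply hcont, clamp_in].
  intros Q [eps He]. exists eps. intros y Hy. apply He; [|apply clamp_in].
  change (Rabs (clamp y - clamp a) < eps).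
  eapply Rle_lt_trans; [apply clamp_lipschitz | exact Hy].
Qed.

Lemma demand_antitone x y : 0 <= x -> x <= y -> y <= qbar -> P y <= P x.
Proof.
  destruct hP as [_ [_ [_ hdec]]]. intros.
  destruct (Req_dec x y) as [->|]; [lra|]. left; apply hdec; lra.
Qed.

Lemma demand_nonneg y : 0 <= y <= qbar -> 0 <= P y.
Proof.
  intros. destruct hP as [_ [hzero _]]. rewrite <- hzero. apply demand_antitone; lra.
Qed.

Lemma ex_RInt_demand a b : 0 <= a -> a <= b -> b <= qbar -> ex_RInt P a b.
Proof.
  intros. apply (ex_RInt_ext (fun y => P (clamp y))).
  - intros y Hy. rewrite Rmin_left, Rmax_right in Hy by lra. rewrite clamp_id; lra.
  - apply (@ex_RInt_continuous R_CompleteNormedModule). intros z _.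
    apply continuity_pt_filterlim, continuity_pt_demand_clamp.
Qed.

Lemma V_increment_bounds a b : 0 <= a -> a <= b -> b <= qbar ->
  (b - a) * P b <= V P b - V P a <= (b - a) * P a.
Proof.
  intros Ha Hab Hb. assert (Hint := ex_RInt_demand a b Ha Hab Hb).
  assert (HV : V P b - V P a = RInt P a b).
  { unfold V. rewrite <- (RInt_Chasles P 0 a b); [| apply ex_RInt_demand; lra | exact Hint].
    change (RInt P 0 a + RInt P a b - RInt P 0 a = RInt P a b). ring. }
  rewrite HV.
  replace ((b - a) * P b) with (RInt (fun _ => P b) a b) by (rewrite RInt_const; reflexivity).
  replace ((b - a) * P a) with (RInt (fun _ => P a) a b) by (rewrite RInt_const; reflexivity).
  split; apply RInt_le; auto; try apply ex_RInt_const; intros y Hy; apply demand_antitone; lra.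
Qed.

Lemma V_0 : V P 0 = 0.
Proof. unfold V. rewrite RInt_point. reflexivity. Qed.

Lemma continuity_pt_V_clamp x : continuity_pt (fun y => V P (clamp y)) x.
Proof.
  apply continuity_pt_lipschitz with (P 0); [apply demand_nonneg; lra|]. intros y.
  assert (Hl := clamp_lipschitz y x). assert (Hy := clamp_in y). assert (Hx := clamp_in x).
  set (a := clamp y) in *. set (b := clamp x) in *.
  assert (0 <= P a <= P 0) by (split; [apply demand_nonneg | apply demand_antitone]; lra).
  assert (0 <= P b <= P 0) by (split; [apply demand_nonneg | apply demand_antitone]; lra).
  apply Rle_trans with (P 0 * Rabs (a - b)); [|apply Rmult_le_compat_l; lra].
  destruct (Rle_dec a b).
  - assert (Hab := V_increment_bounds a b ltac:(lra) ltac:(lra) ltac:(lra)).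
    rewrite !Rabs_left1 by nra. nra.
  - assert (Hba := V_increment_bounds b a ltac:(lra) ltac:(lra) ltac:(lra)).
    rewrite !Rabs_right by nra. nra.
Qed.

Lemma Pinv_spec t : 0 <= t < P 0 -> 0 <= Pinv P qbar t <= qbar /\ P (Pinv P qbar t) = t.
Proof.
  intros Ht. unfold Pinv. apply epsilon_spec. destruct hP as [_ [hzero _]].
  destruct (IVT_cor (fun y => t - P (clamp y)) 0 qbar) as [z [Hz Hfz]].
  - intros y. apply continuity_pt_minus; [apply continuity_pt_const; now intros ? ?|].
    apply continuity_pt_demand_clamp.
  - lra.
  - rewrite !clamp_id, hzero by lra. nra.
  - exists z. rewrite clamp_id in Hfz by lra. lra.
Qed.

Lemma qhat_spec c th : 0 < c -> 0 <= th < P 0 -> A2 P qbar c th ->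
  0 < qhat P qbar c <= qbar /\ V P (qhat P qbar c) - qhat P qbar c * P (qhat P qbar c) = c.
Proof.
  intros hc hth hA2. destruct (Pinv_spec th hth) as [He HPe].
  unfold A2, TS in hA2. set (e := Pinv P qbar th) in *.
  destruct (Req_EM_T e 0); [lra|].
  unfold qhat. apply epsilon_spec.
  destruct (IVT_cor (fun y => V P (clamp y) - clamp y * P (clamp y) - c) 0 e) as [z [Hz Hfz]].
  - intros y. repeat apply continuity_pt_minus; try (apply continuity_pt_const; now intros ? ?).
    + apply continuity_pt_V_clamp.
    + apply continuity_pt_mult; [|apply continuity_pt_demand_clamp].
      apply continuity_pt_lipschitz with 1; [lra|]. intros w.
      rewrite Rmult_1_l. apply clamp_lipschitz.
  - lra.
  - rewrite !clamp_id, V_0, HPe by lra. nra.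
  - rewrite clamp_id in Hfz by lra. exists z.
    destruct (Req_dec z 0) as [->|]; [rewrite V_0 in Hfz; lra | lra].
Qed.

End Demand.

Definition floor_quantity (qh y : R) : R :=
  if Rle_dec qh y then y else if Rlt_dec 0 y then qh else 0.

Definition floor_prob (qh y : R) : R :=
  if Rle_dec qh y then 1 else if Rlt_dec 0 y then y / qh else 0.

Section FloorMechanism.

Variables (qh : R).
Hypothesis hqh : 0 < qh.

Lemma floor_quantity_mul_prob y : 0 <= y -> floor_quantity qh y * floor_prob qh y = y.
Proof.
  intros. unfold floor_quantity, floor_prob.
  destruct Rle_dec; [ring|]. destruct Rlt_dec; [field; lra | lra].
Qed.

Lemma floor_quantity_le y1 y2 : 0 <= y1 <= y2 -> floor_quantity qh y1 <= floor_quantity qh y2.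
Proof. intros. unfold floor_quantity; repeat destruct Rle_dec; repeat destruct Rlt_dec; lra. Qed.

Lemma floor_ratio_bounds y : 0 < y < qh -> 0 < y / qh < 1.
Proof.
  intros Hy. split; [apply Rdiv_lt_0_compat; lra|].
  apply Rmult_lt_reg_r with qh; [lra|]. unfold Rdiv. rewrite Rmult_assoc, Rinv_l; lra.
Qed.

Lemma floor_mechanism_point qbar y : qh <= qbar -> 0 <= y <= qbar ->
  0 <= floor_prob qh y <= 1 /\ 0 <= floor_quantity qh y <= qbar /\
  (floor_quantity qh y = 0 <-> floor_prob qh y = 0).
Proof.
  intros. unfold floor_quantity, floor_prob. destruct Rle_dec; [lra|].
  destruct Rlt_dec; [|lra].
  assert (0 < y / qh < 1) by (apply floor_ratio_bounds; lra).
  lra.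
Qed.

End FloorMechanism.

Definition floor_surplus (P : R -> R) (c qh t y : R) : R :=
  if Rle_dec qh y then V P y - c - t * y else y * (P qh - t).

Section FloorSurplus.

Variables (P : R -> R) (qbar c qh : R).
Hypothesis hP : demand_ok P qbar.
Hypothesis hqh : 0 < qh <= qbar.
Hypothesis hqc : V P qh - qh * P qh = c.

Lemma floor_mechanism_surplus t y : 0 <= y ->
  floor_prob qh y * TS P c t (floor_quantity qh y) = floor_surplus P c qh t y.
Proof.
  intros. unfold floor_prob, floor_quantity, floor_surplus, TS.
  destruct (Rle_dec qh y).
  - destruct (Req_EM_T y 0); [lra | ring].
  - destruct (Rlt_dec 0 y).
    + destruct (Req_EM_T qh 0); [lra|]. rewrite <- hqc. field. lra.
    + destruct (Req_EM_T 0 0); [|lra]. replace y with 0 by lra. ring.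
Qed.

(* Above the floor by concavity of [V], below it by the defining property of [qh]. *)
Lemma TS_le_floor_surplus t q r : 0 < q <= qbar -> 0 < r <= 1 ->
  r * (V P q - c - t * q) <= floor_surplus P c qh t (q * r).
Proof.
  intros Hq Hr. unfold floor_surplus. destruct (Rle_dec qh (q * r)).
  - assert (Hqr := V_increment_bounds P qbar hP (q * r) q ltac:(nra) ltac:(nra) ltac:(lra)).
    assert (Hfl := V_increment_bounds P qbar hP qh (q * r) ltac:(lra) ltac:(lra) ltac:(nra)).
    assert (P (q * r) <= P qh) by (apply (demand_antitone P qbar hP); nra).
    assert (0 <= P (q * r)) by (apply (demand_nonneg P qbar hP); nra).
    assert (V P (q * r) - q * r * P (q * r) >= c) by nra.
    nra.
  - assert (V P q - c <= q * P qh); [|nra].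
    destruct (Rle_dec q qh).
    + assert (H := V_increment_bounds P qbar hP q qh ltac:(lra) ltac:(lra) ltac:(lra)). nra.
    + assert (H := V_increment_bounds P qbar hP qh q ltac:(lra) ltac:(lra) ltac:(lra)). nra.
Qed.

Lemma mechanism_surplus_le t r q : 0 <= r <= 1 -> 0 <= q <= qbar -> (q = 0 <-> r = 0) ->
  r * TS P c t q <= floor_surplus P c qh t (q * r).
Proof.
  intros Hr Hq Hqr. destruct (Req_dec q 0) as [E|E].
  - rewrite (proj1 Hqr E), E. unfold TS, floor_surplus.
    destruct (Req_EM_T 0 0); [|lra]. destruct Rle_dec; lra.
  - assert (r <> 0) by (intro; apply E, Hqr; auto).
    unfold TS. destruct (Req_EM_T q 0); [lra|]. apply TS_le_floor_surplus; lra.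
Qed.

Lemma floor_surplus_le t y1 y2 : 0 <= y1 -> y1 <= y2 -> y2 <= qbar ->
  t <= P (floor_quantity qh y2) -> floor_surplus P c qh t y1 <= floor_surplus P c qh t y2.
Proof.
  intros H1 H12 H2 Ht. unfold floor_surplus, floor_quantity in *.
  destruct (Rle_dec qh y2).
  - assert (Hd : P y2 <= P qh) by (apply (demand_antitone P qbar hP); lra).
    destruct (Rle_dec qh y1).
    + assert (Hb := V_increment_bounds P qbar hP y1 y2 ltac:(lra) ltac:(lra) ltac:(lra)). nra.
    + assert (Hb := V_increment_bounds P qbar hP qh y2 ltac:(lra) ltac:(lra) ltac:(lra)). nra.
  - destruct (Rle_dec qh y1); [lra|]. destruct (Rlt_dec 0 y2).
    + assert (0 <= (y2 - y1) * (P qh - t)) by (apply Rmult_le_pos; lra). nra.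
    + replace y1 with 0 by lra. replace y2 with 0 by lra. lra.
Qed.

Lemma floor_surplus_le_efficient t e y : qh <= e <= qbar -> P e = t -> 0 <= y <= qbar ->
  floor_surplus P c qh t y <= floor_surplus P c qh t e.
Proof.
  intros He HPe Hy.
  assert (Hmax : forall z, qh <= z <= qbar -> V P z - t * z <= V P e - t * e).
  { intros z Hz. destruct (Rle_dec z e).
    - assert (H := V_increment_bounds P qbar hP z e ltac:(lra) ltac:(lra) ltac:(lra)). nra.
    - assert (H := V_increment_bounds P qbar hP e z ltac:(lra) ltac:(lra) ltac:(lra)). nra. }
  unfold floor_surplus. destruct (Rle_dec qh e); [|lra]. destruct (Rle_dec qh y).
  - specialize (Hmax y ltac:(lra)). lra.
  - specialize (Hmax qh ltac:(lra)).
    assert (P e <= P qh) by (apply (demand_antitone P qbar hP); lra). nra.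
Qed.

(* When the efficient quantity [e] is the floor itself, every allocation below the
   floor yields zero surplus, as does [e]. *)
Lemma floor_surplus_max t e y0 y : 0 < e <= qbar -> P e = t -> 0 <= y0 ->
  floor_quantity qh y0 = e -> 0 <= y <= qbar ->
  floor_surplus P c qh t y <= floor_surplus P c qh t y0.
Proof.
  intros He HPe Hy0 Hfq Hy.
  assert (Hmax := floor_surplus_le_efficient t e y).
  unfold floor_quantity in Hfq. destruct (Rle_dec qh y0).
  - subst e. apply Hmax; auto; lra.
  - destruct (Rlt_dec 0 y0); [|lra]. subst e.
    assert (floor_surplus P c qh t y0 = 0 /\ floor_surplus P c qh t qh = 0) as [E0 E1].
    { unfold floor_surplus. destruct (Rle_dec qh y0); [lra|]. destruct (Rle_dec qh qh); [|lra].
      rewrite <- hqc, HPe. split; ring. }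
    rewrite E0, <- E1. apply Hmax; auto; lra.
Qed.

End FloorSurplus.

Definition infR (E : R -> Prop) : R := real (Glb_Rbar E).

Lemma Glb_Rbar_finite E m z : (forall y, E y -> m <= y) -> E z -> Glb_Rbar E = Finite (infR E).
Proof.
  intros Hm Hz. unfold infR. destruct (Glb_Rbar_correct E) as [Hlb Hglb].
  destruct (Glb_Rbar E) as [l| |]; simpl; auto.
  - specialize (Hlb z Hz). contradiction.
  - exfalso. apply (Hglb (Finite m)). intros y Hy. apply Hm; auto.
Qed.

Lemma infR_le E m z : (forall y, E y -> m <= y) -> E z -> infR E <= z.
Proof.
  intros Hm Hz. destruct (Glb_Rbar_correct E) as [Hlb _].
  rewrite (Glb_Rbar_finite E m z Hm Hz) in Hlb. apply (Hlb z Hz).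
Qed.

Lemma le_infR E b z : E z -> (forall y, E y -> b <= y) -> b <= infR E.
Proof.
  intros Hz Hb. destruct (Glb_Rbar_correct E) as [_ Hglb].
  rewrite (Glb_Rbar_finite E b z Hb Hz) in Hglb. apply (Hglb (Finite b)). exact Hb.
Qed.

Definition allocation (tl th : R) (f : R -> R) : Prop :=
  (forall s t, tl <= s -> s <= t -> t <= th -> f t <= f s) /\
  (forall t, tl <= t <= th -> 0 <= f t).

(* The IC constraints for allocation [f] that bound the utility [U] from below. *)
Definition rent_bound (s t : R) (f U : R -> R) : Prop :=
  forall a b, s <= a -> a <= b -> b <= t -> (b - a) * f b <= U a - U b.

(* The least such profile vanishing at [th], i.e. [t |-> \int_t^th f]; taking an
   infimum avoids having to integrate a merely monotone function. *)
Definition rent (tl th : R) (f : R -> R) (t : R) : R :=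
  infR (fun z => exists U, U th = 0 /\ rent_bound tl th f U /\ z = U t).

Section Rent.

Variables (tl th : R) (f : R -> R).
Hypothesis htlth : tl <= th.
Hypothesis hf : allocation tl th f.

Lemma rent_bound_linear : rent_bound tl th f (fun t => (th - t) * f tl).
Proof.
  intros a b Ha Hab Hb. destruct hf as [Hmono _].
  assert (f b <= f tl) by (apply Hmono; lra). nra.
Qed.

Lemma rent_bound_nonneg U t : U th = 0 -> rent_bound tl th f U -> tl <= t <= th -> 0 <= U t.
Proof.
  intros HU0 HU Ht. specialize (HU t th ltac:(lra) ltac:(lra) ltac:(lra)).
  assert (0 <= f th) by (apply hf; lra). nra.
Qed.

Lemma rent_le U t : U th = 0 -> rent_bound tl th f U -> tl <= t <= th -> rent tl th f t <= U t.
Proof.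
  intros. apply infR_le with 0; [|eauto].
  intros y [V [HV0 [HV ->]]]. apply (rent_bound_nonneg V); auto.
Qed.

Lemma le_rent b t : tl <= t <= th ->
  (forall U, U th = 0 -> rent_bound tl th f U -> b <= U t) -> b <= rent tl th f t.
Proof.
  intros Ht Hb. apply le_infR with ((th - t) * f tl).
  - exists (fun t => (th - t) * f tl). repeat split; [ring | apply rent_bound_linear].
  - intros y [U [HU0 [HU ->]]]. auto.
Qed.

Lemma rent_th : rent tl th f th = 0.
Proof.
  apply Rle_antisym.
  - assert (H := rent_le (fun t => (th - t) * f tl) th ltac:(simpl; ring) rent_bound_linear
                    ltac:(lra)).
    simpl in H. lra.
  - apply le_rent; [lra|]. intros U HU0 _. lra.
Qed.

Lemma rent_nonneg t : tl <= t <= th -> 0 <= rent tl th f t.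
Proof. intros. apply le_rent; auto. intros U HU0 HU. apply (rent_bound_nonneg U); auto. Qed.

Lemma rent_bound_rent : rent_bound tl th f (rent tl th f).
Proof.
  intros s t Hs Hst Ht.
  assert (rent tl th f t + (t - s) * f t <= rent tl th f s); [|lra].
  apply le_rent; [lra|]. intros U HU0 HU.
  assert (Ht' := rent_le U t HU0 HU ltac:(lra)). specialize (HU s t Hs Hst Ht). lra.
Qed.

(* Gluing [U] on [s, t] to any profile satisfying [rent_bound] on [t, th] preserves the bound. *)
Lemma rent_decrease_le U s t : tl <= s -> s <= t -> t <= th -> rent_bound s t f U ->
  rent tl th f s - rent tl th f t <= U s - U t.
Proof.
  intros Hs Hst Ht HU.
  assert (rent tl th f s - U s + U t <= rent tl th f t); [|lra].
  apply le_rent; [lra|]. intros V HV0 HV.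
  set (W := fun x => if Rle_dec t x then V x else if Rle_dec s x then U x - U t + V t
                     else U s - U t + V t + (s - x) * f tl).
  assert (HW : rent_bound tl th f W).
  { destruct hf as [Hmono Hpos]. intros a b Ha Hab Hb. unfold W.
    assert (f b <= f tl) by (apply Hmono; lra). assert (0 <= f b) by (apply Hpos; lra).
    destruct (Rle_dec t a); destruct (Rle_dec t b); try lra.
    - apply HV; lra.
    - assert (Htb := HV t b ltac:(lra) ltac:(lra) ltac:(lra)).
      assert (f b <= f t) by (apply Hmono; lra).
      destruct (Rle_dec s a).
      + assert (Hat := HU a t ltac:(lra) ltac:(lra) ltac:(lra)). nra.
      + assert (Hst' := HU s t ltac:(lra) ltac:(lra) ltac:(lra)). nra.
    - destruct (Rle_dec s a); destruct (Rle_dec s b); try lra.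
      + assert (Hab' := HU a b ltac:(lra) ltac:(lra) ltac:(lra)). lra.
      + assert (Hsb := HU s b ltac:(lra) ltac:(lra) ltac:(lra)). nra.
      + nra. }
  assert (HW0 : W th = 0) by (unfold W; destruct (Rle_dec t th); [auto | lra]).
  assert (Hs' := rent_le W s HW0 HW ltac:(lra)). unfold W in Hs'.
  destruct (Rle_dec t s).
  - replace s with t in * by lra. lra.
  - destruct (Rle_dec s s); lra.
Qed.

Lemma rent_decrease_le_rate s t : tl <= s -> s <= t -> t <= th ->
  rent tl th f s - rent tl th f t <= (t - s) * f s.
Proof.
  intros Hs Hst Ht.
  replace ((t - s) * f s) with ((t - s) * f s - (t - t) * f s) by ring.
  apply (rent_decrease_le (fun x => (t - x) * f s)); auto.
  intros a b Ha Hab Hb. destruct hf as [Hmono _].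
  assert (f b <= f s) by (apply Hmono; lra). assert (0 <= f b) by (apply hf; lra). nra.
Qed.

Lemma rent_IC r q : (forall t, tl <= t <= th -> q t * r t = f t) -> IC tl th r q (rent tl th f).
Proof.
  intros Hqr t t' [Ht1 Ht2] [Ht1' Ht2']. rewrite Rmult_assoc, Hqr by lra.
  destruct (Rle_dec t t') as [Hle | Hgt].
  - assert (H := rent_bound_rent t t' Ht1 Hle Ht2'). lra.
  - assert (H := rent_decrease_le_rate t' t Ht1' ltac:(lra) Ht2). lra.
Qed.

Lemma rent_le_decrease U t : rent_bound tl th f U -> tl <= t <= th ->
  rent tl th f t <= U t - U th.
Proof.
  intros HU Ht.
  assert (H := rent_decrease_le U t th ltac:(lra) ltac:(lra) ltac:(lra)
                 ltac:(intros a b ? ? ?; apply HU; lra)).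
  rewrite rent_th in H. lra.
Qed.

Lemma rent_bound_eq_rent U t : rent_bound tl th f U ->
  U tl - U th <= rent tl th f tl -> tl <= t <= th -> U t = rent tl th f t + U th.
Proof.
  intros HU Htl Ht.
  assert (H1 := rent_decrease_le U tl t ltac:(lra) ltac:(lra) ltac:(lra)
                  ltac:(intros a b ? ? ?; apply HU; lra)).
  assert (H2 := rent_le_decrease U t HU Ht). lra.
Qed.

End Rent.

Lemma left_limit_lower_bound (f : R -> R) (a t l : R) : a < t ->
  filterlim f (at_left t) (locally (f t)) -> (forall y, a <= y < t -> l <= f y) -> l <= f t.
Proof.
  intros Hat Hlim Hl.
  apply (closed_filterlim_loc f (fun z => l <= z) (f t) Hlim); [|apply closed_ge].
  exists (mkposreal (t - a) ltac:(lra)). intros y Hy Hyt. apply Hl. split; [|lra].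
  change (Rabs (y - t) < t - a) in Hy. rewrite Rabs_left in Hy; lra.
Qed.

(* Taking the infimum over [s < t] makes the envelope left-continuous. *)
Definition lower_envelope (tl th : R) (x xt : R -> R) (t : R) : R :=
  if Rle_dec t tl then x tl
  else infR (fun z => exists s, tl <= s < t /\ s <= th /\ z = Rmin (x s) (xt s)).

Section LowerEnvelope.

Variables (tl th : R) (x xt : R -> R).
Hypothesis htlth : tl <= th.
Hypothesis hx : allocation tl th x.
Hypothesis hxt : allocation tl th xt.

Let xp := lower_envelope tl th x xt.

Lemma lower_envelope_tl : xp tl = x tl.
Proof. unfold xp, lower_envelope. destruct Rle_dec; [auto | lra]. Qed.

Lemma lower_envelope_le_min s t : tl <= s < t -> s <= th -> xp t <= Rmin (x s) (xt s).
Proof.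
  intros Hs Hsth. unfold xp, lower_envelope. destruct Rle_dec; [lra|].
  apply infR_le with 0; [|eauto].
  intros y [s' [Hs' [Hs'th ->]]]. apply Rmin_glb; [apply hx | apply hxt]; lra.
Qed.

Lemma le_lower_envelope b t : tl < t ->
  (forall s, tl <= s < t -> s <= th -> b <= Rmin (x s) (xt s)) -> b <= xp t.
Proof.
  intros Ht Hb. unfold xp, lower_envelope. destruct Rle_dec; [lra|].
  apply le_infR with (Rmin (x tl) (xt tl)).
  - exists tl. repeat split; lra.
  - intros y [s [Hs [Hsth ->]]]. auto.
Qed.

Lemma lower_envelope_ge_min t : tl <= t <= th -> Rmin (x t) (xt t) <= xp t.
Proof.
  intros Ht. destruct (Rle_lt_or_eq_dec tl t (proj1 Ht)) as [Hlt | <-];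
    [|rewrite lower_envelope_tl; apply Rmin_l].
  apply le_lower_envelope; [lra|]. intros s Hs Hsth.
  destruct hx as [Hx _]; destruct hxt as [Hxt _].
  assert (x t <= x s) by (apply Hx; lra). assert (xt t <= xt s) by (apply Hxt; lra).
  unfold Rmin. repeat destruct Rle_dec; lra.
Qed.

Lemma lower_envelope_nonneg t : 0 <= xp t.
Proof.
  destruct (Rle_dec t tl).
  - unfold xp, lower_envelope. destruct Rle_dec; [apply hx | ]; lra.
  - apply le_lower_envelope; [lra|]. intros s Hs Hsth.
    apply Rmin_glb; [apply hx | apply hxt]; lra.
Qed.

Lemma lower_envelope_allocation : allocation tl th xp.
Proof.
  split.
  - intros s t Hs Hst Ht. destruct (Rle_lt_or_eq_dec s t Hst) as [Hlt | <-]; [|lra].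
    destruct (Rle_lt_or_eq_dec tl s Hs) as [Hs' | <-].
    + apply le_lower_envelope; [lra|]. intros s' Hs'' Hs'th. apply lower_envelope_le_min; lra.
    + rewrite lower_envelope_tl.
      eapply Rle_trans; [apply lower_envelope_le_min with (s := tl); lra | apply Rmin_l].
  - intros t _. apply lower_envelope_nonneg.
Qed.

Lemma lower_envelope_le t : tl <= t <= th ->
  (tl < t -> filterlim x (at_left t) (locally (x t))) -> xp t <= x t.
Proof.
  intros Ht Hlc. destruct (Rle_lt_or_eq_dec tl t (proj1 Ht)) as [Hlt | <-];
    [|rewrite lower_envelope_tl; lra].
  apply (left_limit_lower_bound x tl); [lra | apply Hlc; lra|].
  intros y Hy. eapply Rle_trans; [apply lower_envelope_le_min with (s := y); lra | apply Rmin_l].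
Qed.

Lemma lower_envelope_left_continuous t : tl < t <= th ->
  filterlim xp (at_left t) (locally (xp t)).
Proof.
  intros Ht. apply filterlim_locally. intros eps.
  destruct (classic (exists s, tl <= s < t /\ Rmin (x s) (xt s) < xp t + eps))
    as [[s [Hs Hlt]] | Hnone].
  - exists (mkposreal (t - s) ltac:(lra)). intros y Hy Hyt.
    change (Rabs (y - t) < t - s) in Hy. rewrite Rabs_left in Hy by lra.
    assert (Hys := lower_envelope_le_min s y ltac:(lra) ltac:(lra)).
    assert (Hty := proj1 lower_envelope_allocation y t ltac:(lra) ltac:(lra) ltac:(lra)).
    change (Rabs (xp y - xp t) < eps). rewrite Rabs_right; lra.
  - exfalso. assert (xp t + eps <= xp t); [|destruct eps; simpl in *; lra].
    apply le_lower_envelope; [lra|]. intros s Hs _.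
    apply Rnot_lt_le. intros Hlt. apply Hnone. eauto.
Qed.

End LowerEnvelope.

Lemma IC_increment_bounds tl th r q u s t : IC tl th r q u -> tl <= s -> s <= t -> t <= th ->
  (t - s) * (q t * r t) <= u s - u t <= (t - s) * (q s * r s).
Proof.
  intros H Hs Hst Ht.
  assert (H1 := H s t ltac:(split; lra) ltac:(split; lra)).
  assert (H2 := H t s ltac:(split; lra) ltac:(split; lra)).
  split; nra.
Qed.

Lemma IC_allocation qbar tl th r q u : is_mech qbar tl th r q u -> IC tl th r q u ->
  allocation tl th (fun t => q t * r t).
Proof.
  intros Hm HIC. split.
  - intros s t Hs Hst Ht. destruct (Req_dec s t) as [->|]; [lra|].
    assert (Hb := IC_increment_bounds tl th r q u s t HIC Hs Hst Ht).
    apply Rmult_le_reg_l with (t - s); lra.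
  - intros t Ht. destruct (Hm t Ht) as [Hr [Hq _]]. nra.
Qed.

Lemma IC_rent_bound tl th r q u : IC tl th r q u -> rent_bound tl th (fun t => q t * r t) u.
Proof. intros HIC a b Ha Hab Hb. apply (IC_increment_bounds tl th r q u); auto. Qed.

Lemma IC_same_utility_allocation_le tl th r q rt qt u t :
  IC tl th r q u -> IC tl th rt qt u -> tl < t <= th ->
  filterlim (fun s => q s * r s) (at_left t) (locally (q t * r t)) ->
  qt t * rt t <= q t * r t.
Proof.
  intros HIC HICt Ht Hlc.
  apply (left_limit_lower_bound (fun s => q s * r s) tl); [lra | exact Hlc|].
  intros y Hy.
  assert (H1 := IC_increment_bounds tl th r q u y t HIC ltac:(lra) ltac:(lra) ltac:(lra)).
  assert (H2 := IC_increment_bounds tl th rt qt u y t HICt ltac:(lra) ltac:(lra) ltac:(lra)).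
  apply Rmult_le_reg_l with (t - y); lra.
Qed.

Lemma le_of_forall_interior a b X D : a < b -> 0 <= X ->
  (forall c, a < c < b -> (c - a) * X <= D) -> (b - a) * X <= D.
Proof.
  intros Hab HX H. apply Rle_plus_epsilon. intros eps Heps.
  set (d := Rmin ((b - a) / 2) (eps / (X + 1))).
  assert (Hd : 0 < d) by (apply Rmin_glb_lt; [lra | apply Rdiv_lt_0_compat; lra]).
  assert (Hd1 : d <= (b - a) / 2) by apply Rmin_l.
  assert (Hd2 : d * (X + 1) <= eps).
  { apply Rle_trans with (eps / (X + 1) * (X + 1)).
    - apply Rmult_le_compat_r; [lra | apply Rmin_r].
    - right. field. lra. }
  specialize (H (b - d) ltac:(lra)). nra.
Qed.

Lemma is_interval_preimage tl th (f : R -> R) (S : R -> Prop) :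
  (forall s t, tl <= s -> s <= t -> t <= th -> f t <= f s) -> is_interval S ->
  is_interval (fun t => inTheta tl th t /\ S (f t)).
Proof.
  intros Hf HS a b d [Ha HSa] [Hd HSd] Hb. destruct Ha, Hd.
  split; [split; lra|]. apply HS with (f d) (f a); auto. split; apply Hf; lra.
Qed.

Lemma floor_randomized_point P qbar c tl th r q u t : 0 < qhat P qbar c ->
  floor_randomized P qbar c tl th r q u -> inTheta tl th t ->
  q t = floor_quantity (qhat P qbar c) (q t * r t) /\
  r t = floor_prob (qhat P qbar c) (q t * r t).
Proof.
  intros Hqh [_ [_ [T1 [T01 [T0 [_ [_ [_ [Hpart [_ [_ [_ [_ [_ [H1 [H01 H0]]]]]]]]]]]]]]]] Ht.
  unfold floor_quantity, floor_prob. set (qh := qhat P qbar c) in *.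
  destruct (proj1 (Hpart t) Ht) as [HT | [HT | HT]].
  - destruct (H1 t HT) as [Hq ->]. rewrite Rmult_1_r. destruct Rle_dec; [auto | lra].
  - destruct (H01 t HT) as [-> Hr]. destruct Rle_dec; [nra|].
    destruct Rlt_dec; [split; [auto | field; lra] | nra].
  - destruct (H0 t HT) as [-> ->]. rewrite Rmult_0_l.
    destruct Rle_dec; [lra|]. destruct Rlt_dec; lra.
Qed.

Lemma floor_mechanism_floor_randomized P qbar c tl th f :
  0 < qhat P qbar c <= qbar -> tl <= th -> allocation tl th f ->
  (forall t, inTheta tl th t -> f t <= qbar) ->
  floor_randomized P qbar c tl th (fun t => floor_prob (qhat P qbar c) (f t))
    (fun t => floor_quantity (qhat P qbar c) (f t)) (rent tl th f).
Proof.
  intros Hqh Htlth Hf Hfq. unfold floor_randomized. set (qh := qhat P qbar c) in *.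
  pose proof Hf as [Hmono Hpos].
  split; [split; [|split] | split].
  - intros t Ht. apply floor_mechanism_point; [lra | lra | split; [apply Hpos | apply Hfq]; auto].
  - apply rent_IC; auto. intros t Ht. apply floor_quantity_mul_prob; [lra | apply Hpos; auto].
  - intros t Ht. apply Rle_ge, rent_nonneg; auto.
  - apply rent_th; auto.
  - exists (fun t => inTheta tl th t /\ qh <= f t),
           (fun t => inTheta tl th t /\ 0 < f t < qh),
           (fun t => inTheta tl th t /\ f t = 0).
    unfold floor_quantity, floor_prob.
    split; [|split; [|split; [|split; [|split; [|split;
      [|split; [|split; [|split; [|split; [|split]]]]]]]]]].
    + apply (is_interval_preimage tl th f (fun y => qh <= y)); auto. intros a b d; lra.
    + apply (is_interval_preimage tl th f (fun y => 0 < y < qh)); auto. intros a b d; lra.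
    + apply (is_interval_preimage tl th f (fun y => y = 0)); auto. intros a b d; lra.
    + intros t. split.
      * intros Ht. assert (0 <= f t) by (apply Hpos; auto).
        destruct (Rle_dec qh (f t)); [left; auto | right].
        destruct (Req_dec (f t) 0); [right | left; split; [|lra]]; auto.
      * intros [[? _] | [[? _] | [? _]]]; auto.
    1-3: intros t [[_ ?] [_ ?]]; lra.
    1-2: intros a b [[Ha1 Ha2] Ha] [[Hb1 Hb2] Hb]; apply Rnot_le_lt; intros Hba;
         assert (f a <= f b) by (apply Hmono; lra); lra.
    + intros t [_ Ht]. destruct Rle_dec; [split; lra | lra].
    + intros t [_ Ht]. destruct Rle_dec; [lra|]. destruct Rlt_dec; [|lra].
      split; [auto | apply floor_ratio_bounds; lra].
    + intros t [_ Ht]. destruct Rle_dec; [lra|]. destruct Rlt_dec; [lra | split; lra].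
Qed.

Section Improvement.

Variables (P : R -> R) (qbar c tl th alpha : R).
Hypothesis hP : demand_ok P qbar.
Hypothesis hc : 0 < c.
Hypothesis htl : 0 < tl.
Hypothesis htlth : tl < th.
Hypothesis hrange : th < P 0.
Hypothesis hA2 : A2 P qbar c th.
Hypothesis halpha : 0 <= alpha < 1.

Variables (r q u rt qt ut : R -> R).
Hypothesis hfr : floor_randomized P qbar c tl th r q u.
Hypothesis hlc : left_continuous tl th r q.
Hypothesis hdd : DD P qbar tl th q.
Hypothesis hdom : dominates P qbar c tl th alpha rt qt ut r q u.

Let qh := qhat P qbar c.
Let x t := q t * r t.
Let xt t := qt t * rt t.
Let xp := lower_envelope tl th x xt.
Let w := rent tl th xp.
Let g := floor_surplus P c qh.

Let qh_spec : 0 < qh <= qbar /\ V P qh - qh * P qh = c.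
Proof. apply (qhat_spec P qbar hP c th); auto; lra. Qed.

Let q_e_spec t : inTheta tl th t -> 0 < q_e P qbar t <= qbar /\ P (q_e P qbar t) = t.
Proof.
  intros [Ht1 Ht2]. destruct (Pinv_spec P qbar hP t ltac:(lra)) as [He HPe].
  unfold q_e. repeat split; try lra.
  destruct (Req_dec (Pinv P qbar t) 0) as [E|]; [rewrite E in HPe; lra | lra].
Qed.

Let IC_M : IC tl th r q u.
Proof. apply hfr. Qed.

Let IC_Mt : IC tl th rt qt ut.
Proof. apply hdom. Qed.

Let allocation_x : allocation tl th x.
Proof. apply (IC_allocation qbar tl th r q u); apply hfr. Qed.

Let allocation_xt : allocation tl th xt.
Proof. destruct hdom as [[Hm [HIC _]] _]. apply (IC_allocation qbar tl th rt qt ut); auto. Qed.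

Let x_le_q t : inTheta tl th t -> 0 <= x t <= q t /\ q t <= qbar.
Proof.
  intros Ht. destruct (proj1 (proj1 hfr) t Ht) as [Hr [Hq _]]. unfold x. split; [split|]; nra.
Qed.

Let xt_bounds t : inTheta tl th t -> 0 <= xt t <= qbar.
Proof.
  intros Ht. destruct hdom as [[Hm _] _]. destruct (Hm t Ht) as [Hr [Hq _]]. unfold xt. nra.
Qed.

Let M_point t : inTheta tl th t -> q t = floor_quantity qh (x t) /\ r t = floor_prob qh (x t).
Proof. intros Ht. apply (floor_randomized_point P qbar c tl th r q u); auto. apply qh_spec. Qed.

Let xp_allocation : allocation tl th xp.
Proof. apply lower_envelope_allocation; auto; lra. Qed.

Let xp_le_x t : inTheta tl th t -> xp t <= x t.
Proof.
  intros Ht. apply lower_envelope_le; auto; try lra. intros Htl. apply hlc. destruct Ht; lra.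
Qed.

Let xp_nonneg t : 0 <= xp t.
Proof. apply lower_envelope_nonneg; auto; lra. Qed.

(* Below the allocation of [M] the floor surplus is nondecreasing, by DD. *)
Let le_demand_floor_quantity t y : inTheta tl th t -> 0 <= y <= x t ->
  t <= P (floor_quantity qh y).
Proof.
  intros Ht Hy. destruct (q_e_spec t Ht) as [He HPe]. destruct (x_le_q t Ht) as [Hxq Hq].
  assert (Hfq : floor_quantity qh y <= q_e P qbar t).
  { apply Rle_trans with (q t); [|apply hdd; auto].
    rewrite (proj1 (M_point t Ht)). apply floor_quantity_le; [apply qh_spec | lra]. }
  assert (0 <= floor_quantity qh y).
  { unfold floor_quantity. repeat destruct Rle_dec; repeat destruct Rlt_dec; lra. }
  rewrite <- HPe at 1. apply (demand_antitone P qbar hP); lra.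
Qed.

Let surplus_M t : inTheta tl th t -> RS P c alpha t r q u = g t (x t) - (1 - alpha) * u t.
Proof.
  intros Ht. unfold RS. destruct (M_point t Ht) as [Eq Er]. rewrite Eq, Er.
  unfold g. rewrite (floor_mechanism_surplus P qbar c qh); try apply qh_spec; [ring|].
  apply x_le_q; auto.
Qed.

Let surplus_Mt_le t : inTheta tl th t ->
  RS P c alpha t rt qt ut <= g t (xt t) - (1 - alpha) * ut t.
Proof.
  intros Ht. destruct hdom as [[Hm _] _]. destruct (Hm t Ht) as [Hr [Hq Hqr]].
  unfold RS. assert (H := mechanism_surplus_le P qbar c qh hP (proj1 qh_spec) (proj2 qh_spec) t
                            (rt t) (qt t) Hr Hq Hqr).
  unfold g, xt. lra.
Qed.

Let u_rent_bound : rent_bound tl th xp u.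
Proof.
  intros a b Ha Hab Hb. assert (H := IC_rent_bound tl th r q u IC_M a b Ha Hab Hb).
  assert (xp b <= x b) by (apply xp_le_x; split; lra). unfold x in *. nra.
Qed.

(* [xp b] is only below [xt] strictly left of [b], hence the limit argument. *)
Let ut_rent_bound : rent_bound tl th xp ut.
Proof.
  intros a b Ha Hab Hb. destruct (Rle_lt_or_eq_dec a b Hab) as [Hlt | <-]; [|lra].
  apply le_of_forall_interior; [lra | apply xp_nonneg |]. intros d Hd.
  assert (H1 := IC_increment_bounds tl th rt qt ut a d IC_Mt Ha ltac:(lra) ltac:(lra)).
  assert (H2 := IC_increment_bounds tl th rt qt ut d b IC_Mt ltac:(lra) ltac:(lra) Hb).
  assert (H3 : xp b <= Rmin (x d) (xt d)) by (apply lower_envelope_le_min; auto; lra).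
  assert (H4 := Rmin_r (x d) (xt d)).
  assert (H5 := xt_bounds b ltac:(split; lra)).
  assert (H6 : (d - a) * xp b <= (d - a) * xt d) by (apply Rmult_le_compat_l; lra).
  assert (H7 : 0 <= (b - d) * xt b) by (apply Rmult_le_pos; lra).
  unfold xt in *. lra.
Qed.

Let w_le_u t : inTheta tl th t -> w t <= u t.
Proof.
  intros Ht.
  assert (H := rent_le_decrease tl th xp ltac:(lra) xp_allocation u t u_rent_bound Ht).
  rewrite (proj1 (proj2 hfr)) in H. unfold w. lra.
Qed.

Let w_le_ut t : inTheta tl th t -> w t <= ut t.
Proof.
  intros Ht.
  assert (H := rent_le_decrease tl th xp ltac:(lra) xp_allocation ut t ut_rent_bound Ht).
  destruct hdom as [[_ [_ HIR]] _]. assert (ut th >= 0) by (apply HIR; split; lra).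
  unfold w. lra.
Qed.

Let r' t := floor_prob qh (xp t).
Let q' t := floor_quantity qh (xp t).

Let surplus_M' t : RS P c alpha t r' q' w = g t (xp t) - (1 - alpha) * w t.
Proof.
  unfold RS, r', q', g.
  rewrite (floor_mechanism_surplus P qbar c qh); try apply qh_spec; [ring | apply xp_nonneg].
Qed.

Let surplus_M'_ge t : inTheta tl th t -> RS P c alpha t r' q' w >= RS P c alpha t r q u.
Proof.
  intros Ht. rewrite surplus_M', surplus_M by auto.
  assert (Hwu := w_le_u t Ht). assert (Hxp := xp_le_x t Ht).
  destruct (Req_dec (xp t) (x t)) as [E|E]; [rewrite E; nra|].
  assert (Hxt : xt t <= xp t).
  { assert (H := lower_envelope_ge_min tl th x xt ltac:(lra) allocation_x allocation_xt t Ht).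
    revert H. fold xp. unfold Rmin. destruct Rle_dec; lra. }
  assert (Hg : g t (xt t) <= g t (xp t)).
  { apply (floor_surplus_le P qbar c qh hP (proj1 qh_spec) (proj2 qh_spec)).
    - apply xt_bounds, Ht.
    - exact Hxt.
    - destruct (x_le_q t Ht). lra.
    - apply le_demand_floor_quantity; auto. }
  destruct hdom as [_ [_ [Hge _]]]. assert (H1 := Hge t Ht).
  assert (H2 := surplus_Mt_le t Ht). assert (H3 := w_le_ut t Ht). rewrite surplus_M in H1 by auto.
  nra.
Qed.

Let surplus_max_tl y : 0 <= y <= qbar -> g tl y <= g tl (x tl).
Proof.
  intros Hy. assert (Htl : inTheta tl th tl) by (split; lra).
  destruct (q_e_spec tl Htl) as [He HPe].
  apply (floor_surplus_max P qbar c qh hP (proj1 qh_spec) (proj2 qh_spec) tl (q_e P qbar tl));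
    auto; [apply x_le_q; auto|].
  rewrite <- (proj1 (M_point tl Htl)). apply hdd.
Qed.

Let u_eq_w : u tl <= w tl -> forall t, inTheta tl th t -> u t = w t.
Proof.
  intros Htight t Ht. destruct hfr as [_ [Hu0 _]].
  assert (H := rent_bound_eq_rent tl th xp ltac:(lra) xp_allocation u t u_rent_bound).
  fold w in H. rewrite Hu0 in H. specialize (H ltac:(lra) Ht). lra.
Qed.

(* If [M'] gains nothing at [tl], the chain RS <= RS~ <= RS' is tight at [tl],
   which pins down the utility of the dominating mechanism. *)
Let ut_eq_u : u tl <= w tl -> forall t, inTheta tl th t -> ut t = u t.
Proof.
  intros Htight. assert (Htl : inTheta tl th tl) by (split; lra).
  destruct hdom as [[_ [_ HIR]] [_ [Hge _]]].
  assert (Hut_tl : ut tl <= u tl).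
  { assert (H1 := Hge tl Htl). rewrite surplus_M in H1 by auto.
    assert (H2 := surplus_Mt_le tl Htl).
    assert (H3 : g tl (xt tl) <= g tl (x tl)).
    { apply surplus_max_tl, xt_bounds, Htl. }
    nra. }
  assert (Hut_th : 0 <= ut th) by (apply Rge_le, HIR; split; lra).
  assert (Hw := u_eq_w Htight tl Htl).
  assert (Heq := rent_bound_eq_rent tl th xp ltac:(lra) xp_allocation ut).
  assert (Hth : ut th = 0).
  { specialize (Heq tl ut_rent_bound ltac:(fold w; lra) Htl). fold w in Heq. lra. }
  intros t Ht. rewrite (u_eq_w Htight t Ht).
  rewrite (Heq t ut_rent_bound ltac:(fold w; lra) Ht). fold w. lra.
Qed.

Let w_lt_u_tl : w tl < u tl.
Proof.
  apply Rnot_le_lt. intros Htight. destruct hdom as [_ [_ [_ [t0 [Ht0 Hgt]]]]].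
  assert (Hg : g t0 (x t0) < g t0 (xt t0)).
  { assert (H := surplus_Mt_le t0 Ht0). rewrite surplus_M in Hgt by auto.
    rewrite (ut_eq_u Htight t0 Ht0) in H. lra. }
  destruct (Rle_lt_or_eq_dec tl t0 (proj1 Ht0)) as [Hlt | <-].
  - assert (Hxt : xt t0 <= x t0).
    { apply (IC_same_utility_allocation_le tl th r q rt qt u t0 IC_M);
        [| destruct Ht0; lra | apply hlc; destruct Ht0; lra].
      intros s s' Hs Hs'. rewrite <- (ut_eq_u Htight s Hs), <- (ut_eq_u Htight s' Hs').
      apply IC_Mt; auto. }
    assert (g t0 (xt t0) <= g t0 (x t0)); [|lra].
    apply (floor_surplus_le P qbar c qh hP (proj1 qh_spec) (proj2 qh_spec)); auto.
    + apply xt_bounds, Ht0.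
    + destruct (x_le_q t0 Ht0); lra.
    + apply le_demand_floor_quantity; auto. destruct (x_le_q t0 Ht0); lra.
  - assert (g tl (xt tl) <= g tl (x tl)) by apply surplus_max_tl, xt_bounds, Ht0. lra.
Qed.

Let surplus_M'_gt : exists t, inTheta tl th t /\ RS P c alpha t r' q' w > RS P c alpha t r q u.
Proof.
  assert (Htl : inTheta tl th tl) by (split; lra).
  assert (Hlt := w_lt_u_tl). exists tl. split; auto. rewrite surplus_M', surplus_M by auto.
  unfold xp. rewrite lower_envelope_tl. nra.
Qed.

Let improved_allocation t : q' t * r' t = xp t.
Proof. apply floor_quantity_mul_prob; [apply qh_spec | apply xp_nonneg]. Qed.

Lemma improved_floor_randomized : floor_randomized P qbar c tl th r' q' w.
Proof.
  apply floor_mechanism_floor_randomized; auto; [apply qh_spec | lra |].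
  intros t Ht. assert (H := xp_le_x t Ht). assert (H' := x_le_q t Ht). lra.
Qed.

Lemma improved_left_continuous : left_continuous tl th r' q'.
Proof.
  intros t Ht. apply (filterlim_ext xp); [intros; rewrite improved_allocation; auto|].
  rewrite improved_allocation. apply lower_envelope_left_continuous; auto; lra.
Qed.

Lemma improved_DD : DD P qbar tl th q'.
Proof.
  split.
  - intros t Ht. apply Rle_trans with (q t); [|apply hdd; auto].
    unfold q'. rewrite (proj1 (M_point t Ht)). apply floor_quantity_le; [apply qh_spec|].
    split; [apply xp_nonneg | apply xp_le_x; auto].
  - assert (Htl : inTheta tl th tl) by (split; lra).
    unfold q', xp. rewrite lower_envelope_tl. fold x. rewrite <- (proj1 (M_point tl Htl)).
    apply hdd.
Qed.

Lemma improved_dominates : dominates P qbar c tl th alpha r' q' w r q u.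
Proof.
  split; [apply improved_floor_randomized|].
  split; [apply hfr|]. split; [exact surplus_M'_ge | exact surplus_M'_gt].
Qed.

Lemma improved_allocation_le t : inTheta tl th t -> q' t * r' t <= q t * r t.
Proof. intros Ht. rewrite improved_allocation. apply xp_le_x; auto. Qed.

End Improvement.

Theorem theorem5 (P : R -> R) (qbar c tl th alpha : R)
  (hP : demand_ok P qbar) (hc : 0 < c)
  (htl : 0 < tl) (htlth : tl < th)
  (hrange : th < P 0) (* P^{-1}(th) exists, presupposed by (A2) *)
  (hA2 : A2 P qbar c th)
  (halpha : 0 <= alpha < 1)
  (r q u : R -> R)
  (hfr : floor_randomized P qbar c tl th r q u)
  (hlc : left_continuous tl th r q)
  (hdd : DD P qbar tl th q)
  (hdom : dominated P qbar c tl th alpha r q u) :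
  exists r' q' u' : R -> R,
    floor_randomized P qbar c tl th r' q' u' /\
    left_continuous tl th r' q' /\
    DD P qbar tl th q' /\
    dominates P qbar c tl th alpha r' q' u' r q u /\
    (forall t, inTheta tl th t -> q' t * r' t <= q t * r t).
Proof.
  destruct hdom as (rt & qt & ut & hdom).
  set (xp := lower_envelope tl th (fun t => q t * r t) (fun t => qt t * rt t)).
  exists (fun t => floor_prob (qhat P qbar c) (xp t)),
         (fun t => floor_quantity (qhat P qbar c) (xp t)), (rent tl th xp).
  split; [|split; [|split; [|split]]].
  - eapply improved_floor_randomized; eassumption.
  - eapply improved_left_continuous; eassumption.
  - eapply improved_DD; eassumption.
  - eapply improved_dominates; eassumption.
  - intros t; eapply improved_allocation_le; eassumption.
Qed.
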